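(* There exists $n_0$ such that for all $n\ge n_0$, $\mathrm{ex}(n,S_4,K_4)=\mathcal{N}(S_4,T_3(n))$; that is, $S_4$ is $4$-Tur\'an-good.
   Context: $S_4$ is the star on $4$ vertices (a center with three leaves). $T_3(n)$ is the complete $3$-partite graph on $n$ vertices with part sizes $\lfloor n/3\rfloor$ or $\lceil n/3\rceil$. For graphs $H,G$, $\mathcal{N}(H,G)$ is the number of subgraphs of $G$ isomorphic to $H$, and $\mathrm{ex}(n,H,F)$ is the maximum of $\mathcal{N}(H,G)$ over $F$-free graphs $G$ on $n$ vertices. A graph $H$ is $k$-Tur\'an-good if $\mathrm{ex}(n,H,K_k)=\mathcal{N}(H,T_{k-1}(n))$ for all sufficiently large $n$. *)

From mathcomp Require Import all_boot.
Set Implicit Arguments. Unset Strict Implicit. Unset Printing Implicit Defensive.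

Definition simple_graph (T : finType) (E : {set {set T}}) : bool :=
  [forall e in E, #|e| == 2].

Definition iso_to (T V : finType) (EH : {set {set V}})
    (U : {set T}) (F : {set {set T}}) : bool :=
  [exists f : {ffun V -> T},
     [&& injectiveb f, f @: [set: V] == U &
         [forall e : {set V}, (e \in EH) == (f @: e \in F)]]].

Definition count_copies (V : finType) (EH : {set {set V}})
    (T : finType) (E : {set {set T}}) : nat :=
  #|[set p : {set T} * {set {set T}} |
      [&& p.2 \subset E, [forall e in p.2, e \subset p.1] &
          iso_to EH p.1 p.2]]|.

Definition complete_graph (k : nat) : {set {set 'I_k}} :=
  [set e : {set 'I_k} | #|e| == 2].

Definition star4 : {set {set 'I_4}} :=
  [set [set ord0; i] | i : 'I_4 & i != ord0].

(* Turan graph T_r(n) on 'I_n: vertex i in part (i mod r); parts have sizes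
   floor(n/r) or ceil(n/r); two vertices adjacent iff in different parts. *)
Definition turan_graph (r n : nat) : {set {set 'I_n}} :=
  [set e : {set 'I_n} | [exists i : 'I_n, exists j : 'I_n,
      (e == [set i; j]) && (i %% r != j %% r)]].

Definition gen_ex (n : nat) (V : finType) (EH : {set {set V}})
    (W : finType) (EF : {set {set W}}) : nat :=
  \max_(E : {set {set 'I_n}} | simple_graph E && (count_copies EF E == 0))
     count_copies EH E.

Definition turan_good (V : finType) (EH : {set {set V}}) (k : nat) : Prop :=
  exists n0, forall n, n0 <= n ->
    gen_ex n EH (complete_graph k) = count_copies EH (turan_graph k.-1 n).

From Stdlib Require Import ZArith.
From mathcomp Require Import all_boot zify.

(* A copy of S_4 in a simple graph is a centre together with three of its
   neighbours, so N(S_4, G) is the sum of C(d(v), 3) over the vertices v.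
   In a K_4-free graph pick x of maximum degree, put A = N(x), pick y in A with
   the most neighbours inside A and put B = N(y) ∩ A.  A vertex of B has no
   neighbour in B (it would span a K_4 with x and y), a vertex of A has at most
   |B| neighbours in A, and no vertex has more than |A| neighbours; so every
   vertex has degree at most the number of vertices outside its own part of the
   partition (V \ A, B, A \ B), and the sum is at most the number of stars of
   the complete tripartite graph with these part sizes.  Moving a vertex from a
   largest to a smallest part, when they differ by at least 2, does not lower
   that number, so it is maximised by the balanced partition, i.e. by T_3(n),
   which is itself K_4-free. *)

Set Implicit Arguments. Unset Strict Implicit. Unset Printing Implicit Defensive.

Definition tripartite_stars (p q r : nat) : nat :=
  p * 'C(q + r, 3) + q * 'C(p + r, 3) + r * 'C(p + q, 3).

Lemma binom3Z k : (6 * Z.of_nat 'C(k, 3) = Z.of_nat k * (Z.of_nat k - 1) * (Z.of_nat k - 2))%Z.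
Proof.
case: k => [|[|[|k]]] //; have := bin_ffact k.+3 3.
by rewrite !ffactnS ffactn0 (_ : 3`! = 6) //; lia.
Qed.

Lemma tripartite_starsC p q r : tripartite_stars p q r = tripartite_stars q p r.
Proof. by rewrite /tripartite_stars (addnC p q); lia. Qed.

Lemma tripartite_starsCr p q r : tripartite_stars p q r = tripartite_stars p r q.
Proof. by rewrite /tripartite_stars (addnC q r); lia. Qed.

(* Six times the gain in [tripartite_stars_smooth], where [j = r - q] and
   [x = p - q - 1]; each summand is nonnegative on the integers. *)
Lemma smoothing_gain_ge0 (q j x : Z) : (0 <= q -> 0 <= j -> 0 <= x ->
  0 <= (x - 1) * x * (x + 1) + 6 * j * (j - 1) + 12 * q * (q - 1)
       + 3 * j * x * (x - 1 + 2 * j) + 3 * q * x * (x + 4 * q - 3) + 18 * q * j * (x + 1))%Z.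
Proof.
move=> q_ge0 j_ge0 x_ge0.
have ? : (0 <= (x - 1) * x * (x + 1))%Z by nia.
have ? : (0 <= j * (j - 1))%Z by nia.
have ? : (0 <= q * (q - 1))%Z by nia.
have ? : (0 <= j * x * (x - 1 + 2 * j))%Z by nia.
have ? : (0 <= q * x * (x + 4 * q - 3))%Z by nia.
have ? : (0 <= q * j * (x + 1))%Z by nia.
lia.
Qed.

Lemma tripartite_stars_smooth p q r : q <= r -> q < p ->
  tripartite_stars p.+1 q r <= tripartite_stars p q.+1 r.
Proof.
rewrite /tripartite_stars -addSnnS => /subnKC <- /subnKC <-; apply: leq_add => //.
set j := r - q; set x := p - q.+1.
have := @smoothing_gain_ge0 (Z.of_nat q) (Z.of_nat j) (Z.of_nat x).
have := congr1 (Z.mul (Z.of_nat (q.+1 + x).+1)) (binom3Z (q + (q + j))).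
have := congr1 (Z.mul (Z.of_nat q)) (binom3Z ((q.+1 + x).+1 + (q + j))).
have := congr1 (Z.mul (Z.of_nat (q.+1 + x))) (binom3Z (q.+1 + (q + j))).
have := congr1 (Z.mul (Z.of_nat q.+1)) (binom3Z (q.+1 + x + (q + j))).
lia.
Qed.

Lemma tripartite_stars_le_balanced n p q r : p + q + r = n ->
  tripartite_stars p q r <= tripartite_stars ((n + 2) %/ 3) ((n + 1) %/ 3) (n %/ 3).
Proof.
(* Induction on the sum of squares, which each smoothing step decreases. *)
have [k] := ubnP (p * p + q * q + r * r); elim: k p q r => // k IH p q r ltk sum_n.
wlog [qp qr rp] : p q r ltk sum_n / [/\ q <= p, q <= r & r <= p].
  move=> W; case: (leqP q p) => qp; case: (leqP q r) => qr; case: (leqP r p) => rp;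
    first [ by apply: W; try split; lia
          | rewrite tripartite_starsC; apply: W; try split; lia
          | rewrite tripartite_starsCr; apply: W; try split; lia
          | rewrite tripartite_starsC tripartite_starsCr; apply: W; try split; lia
          | rewrite tripartite_starsCr tripartite_starsC; apply: W; try split; lia
          | rewrite tripartite_starsC tripartite_starsCr tripartite_starsC;
            apply: W; try split; lia ].
case: (leqP p q.+1) => [pq|qp2].
  have -> : p = (n + 2) %/ 3 by lia.
  have -> : q = n %/ 3 by lia.
  have -> : r = (n + 1) %/ 3 by lia.
  by rewrite tripartite_starsCr.
case: p qp rp ltk sum_n qp2 => // p qp rp ltk sum_n qp2.
apply: leq_trans (tripartite_stars_smooth qr qp2) (IH _ _ _ _ _); lia.
Qed.

Lemma imset_preimset (aT rT : finType) (f : aT -> rT) (e : {set rT}) :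
  e \subset f @: setT -> f @: (f @^-1: e) = e.
Proof.
move=> sub_e; apply/setP => x; apply/imsetP/idP => [[y]|xe].
  by rewrite inE => ye ->.
have /imsetP[y _ xfy] := subsetP sub_e x xe.
by exists y; rewrite // inE -xfy.
Qed.

Lemma iso_toP (V T : finType) (EH : {set {set V}}) (U : {set T}) (F : {set {set T}}) :
  {in F, forall e : {set T}, e \subset U} ->
  reflect (exists f : V -> T,
             [/\ injective f, f @: setT = U & F = [set f @: e | e : {set V} in EH]])
          (iso_to EH U F).
Proof.
move=> FU; apply: (iffP existsP) => [[f /and3P[/injectiveP f_inj /eqP fU /forallP fF]]|].
  exists f; split=> //; apply/setP => e; apply/idP/imsetP => [eF|[e' e'H ->]].
    have sub_e : e \subset f @: setT by rewrite fU FU.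
    by exists (f @^-1: e); rewrite ?imset_preimset // (eqP (fF _)) imset_preimset.
  by rewrite -(eqP (fF e')).
move=> [f [f_inj fU ->]]; exists (finfun f).
have ff : finfun f =1 f := ffunE f.
apply/and3P; split.
- by apply/injectiveP => x y; rewrite !ff => /f_inj.
- by rewrite (eq_imset _ ff) fU.
- by apply/forallP => e; rewrite (eq_imset _ ff) (mem_imset _ _ (imset_inj f_inj)).
Qed.

Definition neighbours (T : finType) (E : {set {set T}}) (v : T) : {set T} :=
  [set x | [set v; x] \in E].

Definition star_edges (T : finType) (c : T) (L : {set T}) : {set {set T}} :=
  [set [set c; x] | x in L].

Lemma set2_inj (T : finType) (c : T) : injective (fun x : T => [set c; x]).
Proof.
move=> x y /= /setP exy; have := exy x; rewrite !inE eqxx orbT.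
case/esym/orP=> /eqP // xc; subst x.
by have := exy y; rewrite !inE eqxx orbT orbb => /eqP.
Qed.

Lemma star_edges_inj (T : finType) (c c' : T) (L L' : {set T}) :
  1 < #|L| -> star_edges c L = star_edges c' L' -> c = c' /\ L = L'.
Proof.
move=> L2 eqF.
have cc' : c = c'.
  have [x /setD1P[xc' xL]] : exists x, x \in L :\ c'.
    apply/set0Pn; rewrite -card_gt0; move: L2; rewrite (cardsD1 c' L).
    by case: (c' \in L) => /=; lia.
  have : [set c; x] \in star_edges c' L' by rewrite -eqF; apply: imset_f.
  case/imsetP=> y _ /setP/(_ c'); rewrite !inE eqxx /=.
  by case/orP=> /eqP e; [rewrite e | rewrite e eqxx in xc'].
subst c'; split=> //; apply/setP => x.
have := congr1 (fun F : {set {set T}} => [set c; x] \in F) eqF.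
by rewrite /= !(@mem_imset _ _ (fun y => [set c; y]) _ x (@set2_inj _ c)).
Qed.

Lemma imset_star4 (T : finType) (f : 'I_4 -> T) :
  [set f @: e | e : {set 'I_4} in star4] = star_edges (f ord0) (f @: [set~ ord0]).
Proof.
rewrite /star4 /star_edges -!imset_comp; apply/setP => e.
apply/imsetP/imsetP => -[i]; rewrite !inE => i0 ->; exists i; rewrite ?inE //=.
  by rewrite imsetU1 imset_set1.
by rewrite imsetU1 imset_set1.
Qed.

Lemma imsetT_ord0 (T : finType) (f : 'I_4 -> T) :
  f @: setT = f ord0 |: f @: [set~ ord0].
Proof. by rewrite -imsetU1 -setTD setD1K. Qed.

Lemma star_embedding (T : finType) (c : T) (L : {set T}) : c \notin L -> #|L| = 3 ->
  exists f : 'I_4 -> T, [/\ injective f, f ord0 = c & f @: [set~ ord0] = L].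
Proof.
move=> cL L3.
pose g (j : 'I_3) := enum_val (cast_ord (esym L3) j).
have gL j : g j \in L by apply: enum_valP.
pose f (i : 'I_4) := if unlift ord0 i is Some j then g j else c.
have f_inj : injective f.
  move=> i i'; rewrite /f.
  case: (unliftP ord0 i) => [j ->|->]; case: (unliftP ord0 i') => [j' ->|->] //.
  - by move/enum_val_inj/cast_ord_inj ->.
  - by move=> gc; rewrite -gc gL in cL.
  - by move=> cg; rewrite cg gL in cL.
exists f; split=> //; first by rewrite /f unlift_none.
apply/eqP; rewrite eqEcard card_imset // cardsC1 card_ord L3 leqnn andbT.
apply/subsetP => _ /imsetP[i i0 ->]; rewrite /f.
case: (unliftP ord0 i) i0 => [j _ _|->]; first exact: gL.
by rewrite !inE eqxx.
Qed.

Lemma iso_star4P (T : finType) (U : {set T}) (F : {set {set T}}) :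
  {in F, forall e : {set T}, e \subset U} ->
  reflect (exists (c : T) (L : {set T}), [/\ c \notin L, #|L| = 3, U = c |: L & F = star_edges c L])
          (iso_to star4 U F).
Proof.
move=> FU; apply: (iffP (iso_toP star4 FU)) => [[f [f_inj <- ->]]|[c [L [cL L3 -> ->]]]].
  exists (f ord0), (f @: [set~ ord0]); split.
  - by rewrite mem_imset // !inE eqxx.
  - by rewrite card_imset // cardsC1 card_ord.
  - exact: imsetT_ord0.
  - exact: imset_star4.
have [f [f_inj <- <-]] := star_embedding cL L3.
by exists f; rewrite imsetT_ord0 imset_star4.
Qed.

Definition star_copy (T : finType) (cL : T * {set T}) : {set T} * {set {set T}} :=
  (cL.1 |: cL.2, star_edges cL.1 cL.2).

Section StarCount.

Variables (T : finType) (E : {set {set T}}).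
Hypothesis simpleE : simple_graph E.

Lemma set1_notin_edges v : [set v] \notin E.
Proof. by apply/negP => /(forall_inP simpleE); rewrite cards1. Qed.

Definition claws : {set T * {set T}} :=
  [set cL : T * {set T} | (cL.2 \subset neighbours E cL.1) && (#|cL.2| == 3)].

Lemma card_claws : #|claws| = \sum_(v : T) 'C(#|neighbours E v|, 3).
Proof.
rewrite -sum1_card (partition_big fst xpredT) //=; apply: eq_bigr => v _.
rewrite -cards_draws -sum1_card (reindex (pair v)) /=; last first.
  by exists snd => [L _|[w L] /andP[_ /eqP /= ->]].
by apply: eq_bigl => L; rewrite /claws !inE eqxx andbT.
Qed.

Lemma count_star4 : count_copies star4 E = \sum_(v : T) 'C(#|neighbours E v|, 3).
Proof.
rewrite -card_claws -(card_in_imset (f := @star_copy T)); last first.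
  move=> [c L] [c' L'] /[!inE] /andP[_ /eqP L3] _ [_ eqF].
  have L2 : 1 < #|L| by rewrite L3.
  by have [-> ->] := star_edges_inj L2 eqF.
congr #|(_ : {set _})|; apply/setP => -[U F]; rewrite !inE /=.
apply/and3P/imsetP => [[FE /forall_inP FU /(iso_star4P FU)[c [L [_ L3 eU eF]]]]|].
  exists (c, L); last by rewrite eU eF.
  rewrite /claws inE L3 eqxx andbT /=.
  by apply/subsetP => x xL; rewrite inE (subsetP FE) // eF; apply: imset_f.
move=> [[c L]] /[!inE] /andP[/= LN /eqP L3] [-> ->].
have cL : c \notin L.
  by apply/negP => /(subsetP LN); rewrite inE setUid (negbTE (set1_notin_edges c)).
have LcL : {in star_edges c L, forall e : {set T}, e \subset c |: L}.
  by move=> _ /imsetP[x xL ->]; apply: setUS; rewrite sub1set.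
split.
- by apply/subsetP => _ /imsetP[x xL ->]; have := subsetP LN x xL; rewrite inE.
- exact/forall_inP.
- by apply/(iso_star4P LcL); exists c, L.
Qed.

End StarCount.

Lemma sum_binom3_le_nested (T : finType) (d : T -> nat) (A B : {set T}) :
  B \subset A -> (forall v, d v <= #|A|) ->
  {in B, forall v, d v <= #|~: A| + #|A :\: B|} ->
  {in A :\: B, forall v, d v <= #|~: A| + #|B|} ->
  \sum_(v : T) 'C(d v, 3) <= tripartite_stars #|~: A| #|B| #|A :\: B|.
Proof.
move=> BA dT dB dAB.
have cardA : #|B| + #|A :\: B| = #|A| by rewrite -{1}(setIidPr BA) cardsID.
rewrite /tripartite_stars cardA (eq_bigl [in [set: T]]) => [|v]; last by rewrite inE.
rewrite (big_setID A) (big_setID B) setTI setTD (setIidPr BA) /= -!sum_nat_const.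
rewrite addnC addnA; apply: leq_add; first apply: leq_add.
- by apply: leq_sum => v _; apply/leq_bin2l/dT.
- by apply: leq_sum => v /dB /leq_bin2l.
- by apply: leq_sum => v /dAB /leq_bin2l.
Qed.

Section K4Free.

Variables (T : finType) (E : {set {set T}}).
Hypotheses (simpleE : simple_graph E) (K4freeE : count_copies (complete_graph 4) E = 0).

Lemma K4_free_no_clique x y v w :
  [set x; y] \in E -> [set x; v] \in E -> [set x; w] \in E ->
  [set y; v] \in E -> [set y; w] \in E -> [set v; w] \in E -> False.
Proof.
move=> xy xv xw yv yw vw.
pose f (i : 'I_4) := nth x [:: x; y; v; w] i.
have f_adj i j : i != j -> [set f i; f j] \in E.
  by case: i j => [[|[|[|[|?]]]] ?] [[|[|[|[|?]]]] ?] //= _; rewrite // setUC.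
have f_inj : injective f.
  move=> i j fij; apply/eqP/negPn/negP => /f_adj.
  by rewrite fij setUid (negbTE (set1_notin_edges simpleE _)).
pose F := [set f @: e | e : {set 'I_4} in complete_graph 4].
have FU : {in F, forall e : {set T}, e \subset f @: setT}.
  by move=> _ /imsetP[e _ ->]; apply: imsetS; apply: subsetT.
suff : 0 < count_copies (complete_graph 4) E by rewrite K4freeE.
apply/card_gt0P; exists (f @: setT, F); rewrite inE /=; apply/and3P; split.
- apply/subsetP => _ /imsetP[e /[!inE] /cards2P[i [j [ij ->]]] ->].
  by rewrite imsetU1 imset_set1; apply: f_adj.
- exact/forall_inP.
- by apply/(iso_toP _ FU); exists f.
Qed.

Let deg v := #|neighbours E v|.

Lemma K4_free_sum_binom3_le :
  exists p q r, p + q + r = #|T| /\ \sum_(v : T) 'C(deg v, 3) <= tripartite_stars p q r.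
Proof.
suff [A [B [BA degA degB degAB]]] : exists A B : {set T},
    [/\ B \subset A, forall v, deg v <= #|A|,
        {in B, forall v, deg v <= #|~: A| + #|A :\: B|}
      & {in A :\: B, forall v, deg v <= #|~: A| + #|B|}].
  exists #|~: A|, #|B|, #|A :\: B|; split; last exact: sum_binom3_le_nested.
  by rewrite -addnA -{1}(setIidPr BA) cardsID addnC cardsC.
have deg_split v (X : {set T}) : deg v <= #|neighbours E v :&: X| + #|~: X|.
  rewrite /deg -(cardsID X (neighbours E v)) leq_add2l.
  by apply/subset_leq_card; rewrite setDE subsetIr.
case: (pickP T) => [x0 _|T0]; last first.
  by exists set0, set0; split=> // v; have := T0 v.
pose x := [arg max_(i > x0) deg i].
have degx v : deg v <= deg x by rewrite /x; case: arg_maxnP => // i _; apply.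
case: (set_0Vmem (neighbours E x)) => [A0|[y0 y0A]].
  exists (neighbours E x), set0; split=> //; first exact: sub0set.
    by move=> v /[!inE].
  by rewrite A0 => v /[!inE].
pose y := [arg max_(i > y0 in neighbours E x) #|neighbours E i :&: neighbours E x|].
have [yA degy] : y \in neighbours E x /\ {in neighbours E x, forall v,
    #|neighbours E v :&: neighbours E x| <= #|neighbours E y :&: neighbours E x|}.
  by rewrite /y; case: arg_maxnP => // i iA H; split=> // v vA; apply: H.
exists (neighbours E x), (neighbours E y :&: neighbours E x); split=> //.
- exact: subsetIr.
- move=> v /setIP[yv vA]; rewrite addnC.
  apply: leq_trans (deg_split v (neighbours E x)) _.
  rewrite leq_add2r; apply/subset_leq_card/subsetP => w /setIP[vw wA].
  apply/setDP; split=> //; apply/setIP => -[yw _].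
  by move: yA vA wA yv yw vw; rewrite !inE; apply: K4_free_no_clique.
- move=> v /setDP[vA _]; rewrite addnC.
  by apply: leq_trans (deg_split v (neighbours E x)) _; rewrite leq_add2r degy.
Qed.

End K4Free.

Section TuranGraph.

Variables r n : nat.

Lemma mem_turan_graph (x y : 'I_n) : ([set x; y] \in turan_graph r n) = (x %% r != y %% r).
Proof.
apply/idP/idP => [|xy].
  rewrite inE => /existsP[i /existsP[j /andP[/eqP e ij]]].
  have ixy : i \in [set x; y] by rewrite e set21.
  have jxy : j \in [set x; y] by rewrite e set22.
  by move: ixy jxy ij => /set2P[]-> /set2P[]->; rewrite ?eqxx // eq_sym.
by rewrite inE; apply/existsP; exists x; apply/existsP; exists y; rewrite eqxx.
Qed.

Lemma turan_graph_simple : simple_graph (turan_graph r n).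
Proof.
apply/forall_inP => _ /[!inE] /existsP[i /existsP[j /andP[/eqP -> ij]]].
by rewrite cards2; case: (eqVneq i j) ij => [->|]; rewrite ?eqxx.
Qed.

Lemma turan_graph_clique_free : 0 < r -> count_copies (complete_graph r.+1) (turan_graph r n) = 0.
Proof.
move=> r_gt0; apply/eqP; rewrite cards_eq0; apply/eqP/setP => -[U F]; rewrite !inE /=.
apply/negP => /and3P[FE /forall_inP FU /(iso_toP _ FU)[f [f_inj _ eF]]].
have res_inj : injective (fun i => Ordinal (ltn_pmod (f i) r_gt0)).
  move=> i j /(congr1 val) /= res_ij; apply/eqP/negPn/negP => ij.
  have : [set f i; f j] \in turan_graph r n.
    have -> : [set f i; f j] = f @: [set i; j] by rewrite imsetU1 imset_set1.
    apply: (subsetP FE); rewrite eF.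
    by apply: imset_f; rewrite inE cards2 ij.
  by rewrite mem_turan_graph res_ij eqxx.
by have := leq_card _ res_inj; rewrite !card_ord ltnn.
Qed.

End TuranGraph.

Lemma sum_mod3 n (F : nat -> nat) :
  \sum_(i < n) F (i %% 3) = (n + 2) %/ 3 * F 0 + (n + 1) %/ 3 * F 1 + n %/ 3 * F 2.
Proof.
elim: n => [|n IH]; first by rewrite big_ord0.
rewrite big_ord_recr /= IH.
move: (divn_eq n 3) (ltn_pmod n (isT : 0 < 3)); set m := n %/ 3.
case: (n %% 3) => [|[|[|//]]] -> _; nia.
Qed.

Lemma card_mod3_class n k : k < 3 -> #|[set u : 'I_n | u %% 3 == k]| = (n + 2 - k) %/ 3.
Proof.
move=> k_lt3; rewrite -sum1_card big_mkcond /=.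
rewrite (eq_bigr (fun u : 'I_n => nat_of_bool (u %% 3 == k))) => [|u _]; last first.
  by rewrite inE; case: (_ == _).
rewrite (sum_mod3 n (fun j => nat_of_bool (j == k))); case: k k_lt3 => [|[|[|//]]] _ /=; lia.
Qed.

Lemma turan_graph3_stars n :
  count_copies star4 (turan_graph 3 n) = tripartite_stars ((n + 2) %/ 3) ((n + 1) %/ 3) (n %/ 3).
Proof.
rewrite count_star4 ?turan_graph_simple //.
have deg v : #|neighbours (turan_graph 3 n) v| = n - (n + 2 - v %% 3) %/ 3.
  have -> : neighbours (turan_graph 3 n) v = ~: [set u : 'I_n | u %% 3 == v %% 3].
    by apply/setP => u; rewrite [u \in neighbours _ _]inE mem_turan_graph !inE eq_sym.
  by rewrite cardsCs setCK card_ord card_mod3_class // ltn_pmod.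
rewrite (eq_bigr _ (fun v _ => congr1 (binomial^~ 3) (deg v))).
rewrite (sum_mod3 n (fun k => 'C(n - (n + 2 - k) %/ 3, 3))) /tripartite_stars.
have -> : n - (n + 2 - 0) %/ 3 = (n + 1) %/ 3 + n %/ 3 by lia.
have -> : n - (n + 2 - 1) %/ 3 = (n + 2) %/ 3 + n %/ 3 by lia.
by have -> : n - (n + 2 - 2) %/ 3 = (n + 2) %/ 3 + (n + 1) %/ 3 by lia.
Qed.

Theorem proposition3p12 :
  exists n0 : nat, forall n : nat, n0 <= n ->
    gen_ex n star4 (complete_graph 4) = count_copies star4 (turan_graph 3 n).
Proof.
exists 0 => n _; apply/eqP; rewrite eqn_leq; apply/andP; split.
- apply/bigmax_leqP => E /andP[simpleE /eqP K4freeE].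
  have [p [q [r [sum_n le_pqr]]]] := K4_free_sum_binom3_le simpleE K4freeE.
  rewrite count_star4 // turan_graph3_stars; apply: leq_trans le_pqr _.
  by apply: tripartite_stars_le_balanced; rewrite sum_n card_ord.
- rewrite /gen_ex; apply: (leq_bigmax_cond (F := fun E => count_copies star4 E)).
  by rewrite turan_graph_simple turan_graph_clique_free.
Qed.
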